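(* Let $n$ be even, $k\ge 1$ an integer, $d=\gcd(k,n)$, $n=td$, $\lambda\in\mathbb{F}_{2^n}$, and $f(x)=Tr(\lambda x^{2^k+1})$ for $x\in\mathbb{F}_{2^n}$. Then $f$ is bent-negabent if and only if one of the following two equivalent statements holds: (1) $\lambda^{2^{n-k}}x^{2^{n-k}}+\lambda x^{2^k}$ is a complete mapping polynomial over $\mathbb{F}_{2^n}$; (2) $\lambda$ is neither of the form $\frac{v_0^{2^{2k}+1}}{(v_0+v_1)^{2^k+1}}$ with $v_0\in\mathbb{F}_{2^n}\setminus\mathbb{F}_{2^d}$ and $v_1=v_0^{2^k}$, nor of the form $v^{2^k+1}$ with $v\in\mathbb{F}_{2^n}$.
   Context: $Tr=Tr_1^n$ is the absolute trace $\mathbb{F}_{2^n}\to\mathbb{F}_2$. A polynomial $F$ over $\mathbb{F}_{2^n}$ is a complete mapping polynomial if both $F(x)$ and $F(x)+x$ are permutation polynomials of $\mathbb{F}_{2^n}$. Fix a self-dual basis of $\mathbb{F}_{2^n}$ over $\mathbb{F}_2$ (basis $\{\alpha_i\}$ with $Tr(\alpha_i\alpha_j)=\delta_{ij}$), identify $\mathbb{F}_{2^n}$ with $\mathbb{F}_2^n$ via coordinates, and let $wt(x)$ be the number of nonzero coordinates of $x$. For $g:\mathbb{F}_{2^n}\to\mathbb{F}_2$: $g$ is bent if $\left|\sum_x(-1)^{g(x)+Tr(\mu x)}\right|=2^{n/2}$ for all $\mu$; $g$ is negabent if $\left|\sum_x(-1)^{g(x)+Tr(\mu x)}\mathrm{i}^{wt(x)}\right|=2^{n/2}$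 for all $\mu$ ($\mathrm{i}=\sqrt{-1}$); $g$ is bent-negabent if it is both. *)

From HB Require Import structures.
From mathcomp Require Import all_boot all_order all_algebra all_field.
Set Implicit Arguments. Unset Strict Implicit. Unset Printing Implicit Defensive.
Import Order.TTheory GRing.Theory Num.Theory.
Local Open Scope ring_scope.

Section Defs.
Variables (F : finFieldType) (n : nat).

Definition Tr (x : F) : F := \sum_(i < n) x ^+ (2 ^ i).

(* Tr x as an element of F_2 = bool (Tr x is 0 or 1) *)
Definition trb (x : F) : bool := Tr x != 0.

Definition self_dual (alpha : 'I_n -> F) : Prop :=
  forall i j : 'I_n, Tr (alpha i * alpha j) = (i == j)%:R.

Definition coords (alpha : 'I_n -> F) (x : F) : option {ffun 'I_n -> bool} :=
  [pick c : {ffun 'I_n -> bool} | x == \sum_(i < n) (c i)%:R * alpha i].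

Definition wt (alpha : 'I_n -> F) (x : F) : nat :=
  if coords alpha x is Some c then #|[set i | c i]| else 0%N.

Definition sgn (b : bool) : algC := (-1) ^+ b.

Definition bent (g : F -> bool) : Prop :=
  forall mu : F, `| \sum_(x : F) sgn (g x (+) trb (mu * x)) | = (2 ^ n./2)%:R.

Definition negabent (alpha : 'I_n -> F) (g : F -> bool) : Prop :=
  forall mu : F,
    `| \sum_(x : F) sgn (g x (+) trb (mu * x)) * 'i ^+ (wt alpha x) | = (2 ^ n./2)%:R.

Definition bent_negabent (alpha : 'I_n -> F) (g : F -> bool) : Prop :=
  bent g /\ negabent alpha g.
End Defs.

Definition perm_poly (F : finFieldType) (p : {poly F}) : Prop :=
  bijective (fun x : F => p.[x]).

Definition complete_mapping (F : finFieldType) (p : {poly F}) : Prop :=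
  perm_poly p /\ perm_poly (p + 'X).

From HB Require Import structures.
From mathcomp Require Import all_boot all_order all_algebra all_field.
From mathcomp Require Import ring.
Set Implicit Arguments. Unset Strict Implicit. Unset Printing Implicit Defensive.
Import Order.TTheory GRing.Theory Num.Theory.
Local Open Scope ring_scope.

(* Since f is quadratic, f(x + a) + f(x) + f(a) = Tr(x L(a)) for the additive map
   L(a) = (lambda a)^(2^(n-k)) + lambda a^(2^k), which is the polynomial P of the
   statement.  Expanding |W_f(mu)|^2 then gives 2^n times a Walsh coefficient of the
   indicator of ker L, so by Fourier inversion f is bent iff ker L = 0.  In a self-dual
   basis i^wt(x) conj(i^wt(x + a)) = (-i)^wt(a) (-1)^Tr(x a), so the same computation
   for the nega-Hadamard transform replaces L by L + id.  Finally L(a) = 0 has a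
   nonzero solution iff lambda is a (2^k+1)-th power, and L(x) = x has one iff
   x = w + w^(2^k) with lambda = w_1^2 / ((w_0 + w_1)(w_1 + w_2)), w_i = w^(2^(i k)):
   the second excluded form, with v_0 = 1/w. *)

Section FieldOfOrder2n.
Variables (F : finFieldType) (n : nat).
Hypothesis cardF : #|F| = (2 ^ n)%N.

Lemma exponent_gt0 : (0 < n)%N.
Proof. by have := finNzRing_gt1 F; rewrite cardF; case: n. Qed.

Lemma pchar2F : 2 \in [pchar F].
Proof. exact: card_finPcharP cardF _. Qed.

Lemma addrr_char2 (x : F) : x + x = 0.
Proof. exact: addrr_pchar2 pchar2F x. Qed.

Lemma addr_eq0_char2 (x y : F) : (x + y == 0) = (x == y).
Proof. by rewrite addr_eq0 (oppr_pchar2 pchar2F). Qed.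

Definition frob (m : nat) (x : F) : F := x ^+ (2 ^ m).

Lemma frob1E (x : F) : frob 1 x = x * x.
Proof. by rewrite /frob expn1 expr2. Qed.

Lemma frob_addn a b (x : F) : frob (a + b) x = frob a (frob b x).
Proof. by rewrite /frob expnD mulnC exprM. Qed.

Lemma frobC a b (x : F) : frob a (frob b x) = frob b (frob a x).
Proof. by rewrite -!frob_addn addnC. Qed.

Lemma frobD m (x y : F) : frob m (x + y) = frob m x + frob m y.
Proof.
elim: m => [|m IHm]; first by rewrite /frob !expr1.
by rewrite -add1n !frob_addn IHm /frob expn1 sqrrD mulr2n addrr_char2 addr0.
Qed.

Lemma frobM m (x y : F) : frob m (x * y) = frob m x * frob m y.
Proof. exact: exprMn. Qed.

Lemma frobV m (x : F) : frob m x^-1 = (frob m x)^-1.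
Proof. exact: exprVn. Qed.

Lemma frob0 m : frob m 0 = 0.
Proof. by rewrite /frob expr0n expn_eq0. Qed.

Lemma frob_sum m (I : finType) (G : I -> F) :
  frob m (\sum_i G i) = \sum_i frob m (G i).
Proof. exact: (big_morph (frob m) (frobD m) (frob0 m)). Qed.

Lemma frob_card (x : F) : frob n x = x.
Proof. by rewrite /frob -cardF expf_card. Qed.

Lemma frob_muln_card c (x : F) : frob (c * n) x = x.
Proof.
elim: c => [|c IHc]; first by rewrite mul0n /frob expr1.
by rewrite mulSn frob_addn IHc frob_card.
Qed.

Lemma frob_modn m (x : F) : frob m x = frob (m %% n) x.
Proof. by rewrite {1}(divn_eq m n) addnC frob_addn frob_muln_card. Qed.

Definition frob_inv (m : nat) : F -> F := frob (n - m %% n).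

Lemma frobK m : cancel (frob m) (frob_inv m).
Proof.
move=> x; rewrite /frob_inv [frob m x]frob_modn -frob_addn subnK ?frob_card //.
by rewrite ltnW // ltn_mod exponent_gt0.
Qed.

Lemma frob_invK m : cancel (frob_inv m) (frob m).
Proof. by move=> x; rewrite /frob_inv frobC; apply: frobK. Qed.

Lemma frob_inj m : injective (frob m).
Proof. exact: can_inj (frobK m). Qed.

Lemma frob_eq0 m (x : F) : (frob m x == 0) = (x == 0).
Proof. by rewrite -[in LHS](frob0 m) (inj_eq (@frob_inj m)). Qed.

Lemma frob_fixed_gcdn k (x : F) : (0 < k)%N ->
  (frob k x = x) <-> (frob (gcdn k n) x = x).
Proof.
have fixM j m : frob j x = x -> frob (m * j) x = x.
  move=> fx; elim: m => [|m IHm]; first by rewrite mul0n /frob expr1.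
  by rewrite mulSn frob_addn IHm.
move=> k_gt0; split=> [fx | fx].
  have [a _ /dvdnP [c def_g]] := Bezoutl n k_gt0.
  by have := fixM k c fx; rewrite -def_g frob_addn frob_muln_card.
by have /dvdnP [m ->] := dvdn_gcdl k n; apply: fixM.
Qed.

Lemma natr_bool_neq0 (b : bool) : (b%:R != 0 :> F) = b.
Proof. by case: b; rewrite ?eqxx ?oner_eq0. Qed.

Lemma natr_addb (u v : bool) : (u (+) v)%:R = u%:R + v%:R :> F.
Proof. by case: u; case: v; rewrite ?addr0 ?add0r //= addrr_char2. Qed.

Lemma TrE (x : F) : Tr n x = \sum_(i < n) frob i x.
Proof. by []. Qed.

Lemma TrD (x y : F) : Tr n (x + y) = Tr n x + Tr n y.
Proof. by rewrite !TrE -big_split; apply: eq_bigr => i _; apply: frobD. Qed.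

Lemma Tr0 : Tr n (0 : F) = 0.
Proof. by rewrite TrE big1 // => i _; apply: frob0. Qed.

Lemma Tr_sum (I : finType) (G : I -> F) : Tr n (\sum_i G i) = \sum_i Tr n (G i).
Proof. exact: (big_morph _ TrD Tr0). Qed.

Lemma Tr_natrM (b : bool) (z : F) : Tr n (b%:R * z) = b%:R * Tr n z.
Proof. by case: b; rewrite ?mul1r ?mul0r ?Tr0. Qed.

Lemma Tr_frob1 (x : F) : Tr n (frob 1 x) = Tr n x.
Proof.
rewrite !TrE; under eq_bigr do rewrite -frob_addn addn1.
have [n' def_n] : exists n', n = n'.+1 by exists n.-1; rewrite prednK ?exponent_gt0.
have := frob_card x; rewrite def_n => fnx.
rewrite big_ord_recr big_ord_recl /= fnx /frob expn0 expr1 addrC.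
by congr (_ + _); apply: eq_bigr.
Qed.

Lemma Tr_frob m (x : F) : Tr n (frob m x) = Tr n x.
Proof.
elim: m => [|m IHm]; first by rewrite /frob expr1.
by rewrite -add1n frob_addn Tr_frob1.
Qed.

Lemma frob_Tr m (x : F) : frob m (Tr n x) = Tr n x.
Proof.
rewrite TrE frob_sum -[RHS](Tr_frob m) TrE.
by apply: eq_bigr => i _; rewrite frobC.
Qed.

Lemma Tr_bool (x : F) : Tr n x = (trb n x)%:R.
Proof.
have : Tr n x * (Tr n x - 1) = 0.
  by rewrite mulrBr mulr1 -frob1E frob_Tr subrr.
rewrite /trb; move/eqP; rewrite mulf_eq0 subr_eq0.
by case/orP=> /eqP->; rewrite ?eqxx ?oner_eq0.
Qed.

Lemma trbD (x y : F) : trb n (x + y) = trb n x (+) trb n y.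
Proof. by rewrite {1}/trb TrD !Tr_bool -natr_addb natr_bool_neq0. Qed.

Lemma trb0 : trb n (0 : F) = false.
Proof. by rewrite /trb Tr0 eqxx. Qed.

Lemma trb_frob m (x : F) : trb n (frob m x) = trb n x.
Proof. by rewrite /trb Tr_frob. Qed.

(* The trace polynomial has degree 2^(n-1) < #|F|, so it cannot vanish everywhere. *)
Lemma trb_exists : exists y : F, trb n y.
Proof.
apply/existsP; apply: contraT; rewrite negb_exists => /forallP trb_false.
pose p : {poly F} := \sum_(i < n) 'X^(2 ^ i).
have size_p : size p = (2 ^ n.-1).+1.
  rewrite /p -(prednK exponent_gt0); elim: n.-1 => [|m IHm].
    by rewrite big_ord1 expn0 size_polyXn.
  by rewrite big_ord_recr /= addrC size_polyDl size_polyXn // IHm ltnS ltn_exp2l.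
have p_neq0 : p != 0 by rewrite -size_poly_eq0 size_p.
have roots_p : all (root p) (enum F).
  apply/allP => y _; rewrite /root /p horner_sum.
  have /negbNE/eqP Try0 := trb_false y.
  by apply/eqP; rewrite -[RHS]Try0 TrE; apply: eq_bigr => i _; rewrite hornerXn.
have := max_poly_roots p_neq0 roots_p (enum_uniq F).
by rewrite -cardE cardF size_p ltnS leqNgt ltn_exp2l // ltn_predL exponent_gt0.
Qed.

Lemma sum_sgn_trb (c : F) :
  \sum_(x : F) sgn (trb n (x * c)) = if c == 0 then (2 ^ n)%:R else 0.
Proof.
have [->|c_neq0] := eqVneq c 0.
  under eq_bigr do rewrite mulr0 trb0 /sgn expr0.
  by rewrite sumr_const cardT -cardE cardF.
have [y trb_y] := trb_exists.
set S := (X in X = _).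
have : S = - S.
  rewrite {1}/S (reindex_inj (addrI (y / c))) /S -sumrN.
  apply: eq_bigr => x _; rewrite mulrDl divfK // trbD trb_y /sgn signr_addb.
  by rewrite expr1 mulN1r.
move/eqP; rewrite -subr_eq0 opprK -mulr2n -mulr_natr mulf_eq0 pnatr_eq0 orbF.
exact: eqP.
Qed.

Definition walsh (s : F -> algC) (mu : F) : algC :=
  \sum_(x : F) s x * sgn (trb n (mu * x)).

Lemma walsh_eq1_supp0 (t : F -> algC) :
  (forall mu, walsh t mu = 1) -> forall b, b != 0 -> t b = 0.
Proof.
move=> walsh_t1 b b_neq0.
have N_neq0 : (2 ^ n)%:R != 0 :> algC by rewrite pnatr_eq0 expn_eq0.
pose G mu := walsh t mu * sgn (trb n (mu * b)).
have : \sum_mu G mu = 0.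
  rewrite (eq_bigr (fun mu => sgn (trb n (mu * b)))) ?sum_sgn_trb ?(negbTE b_neq0) //.
  by move=> mu _; rewrite /G walsh_t1 mul1r.
have -> : \sum_mu G mu = \sum_a t a * \sum_mu sgn (trb n (mu * (a + b))).
  under [RHS]eq_bigr do rewrite mulr_sumr.
  rewrite [RHS]exchange_big; apply: eq_bigr => mu _; rewrite /G /walsh mulr_suml.
  by apply: eq_bigr => a _; rewrite mulrDr trbD /sgn signr_addb mulrA.
rewrite (bigD1 b) //= [X in _ + X]big1 => [|a a_neq_b]; last first.
  by rewrite sum_sgn_trb addr_eq0_char2 (negbTE a_neq_b) mulr0.
rewrite sum_sgn_trb addrr_char2 eqxx addr0 => /eqP.
by rewrite mulf_eq0 (negbTE N_neq0) orbF => /eqP.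
Qed.

Lemma norm_eq_sqrt_pow2 (z : algC) : ~~ odd n ->
  (`|z| = (2 ^ n./2)%:R) <-> (`|z| ^+ 2 = (2 ^ n)%:R).
Proof.
move=> n_even; have -> : (2 ^ n)%:R = ((2 ^ n./2)%:R : algC) ^+ 2.
  by rewrite -natrX -expnM muln2 even_halfK.
split=> [-> // | norm_z2]; apply/eqP.
by rewrite -(@eqrXn2 _ 2) ?norm_z2 ?normr_ge0 ?ler0n.
Qed.

Section WalshSpectrum.
Variables (s c : F -> algC) (L : F -> F).
Hypothesis s_corr : forall x a, s x * (s (x + a))^* = c a * sgn (trb n (x * L a)).

Lemma walsh_normCK mu :
  `|walsh s mu| ^+ 2 = (2 ^ n)%:R * walsh (fun a => (L a == 0)%:R * c a) mu.
Proof.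
have term x a : s x * sgn (trb n (mu * x)) * (s (x + a) * sgn (trb n (mu * (x + a))))^*
    = c a * sgn (trb n (mu * a)) * sgn (trb n (x * L a)).
  rewrite rmorphM rmorph_sign mulrACA s_corr mulrDr trbD /sgn signr_addb.
  by rewrite signrMK mulrAC.
rewrite normCK rmorph_sum mulr_suml.
under eq_bigr => x _.
  rewrite mulr_sumr (reindex_inj (addrI x)) /=.
  under eq_bigr do rewrite term.
  over.
rewrite exchange_big /walsh mulr_sumr; apply: eq_bigr => a _.
rewrite -mulr_sumr sum_sgn_trb.
by case: (L a == 0); rewrite /= ?(mulr1n, mulr0n, mul1r, mul0r, mulr0) // mulrC.
Qed.

Lemma walsh_flatP : c 0 = 1 -> (forall a, c a != 0) -> L 0 = 0 -> ~~ odd n ->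
  (forall mu, `|walsh s mu| = (2 ^ n./2)%:R) <-> (forall a, L a = 0 -> a = 0).
Proof.
move=> c0 c_neq0 L0 n_even.
have N_neq0 : (2 ^ n)%:R != 0 :> algC by rewrite pnatr_eq0 expn_eq0.
pose t a := (L a == 0)%:R * c a.
split=> [flat b Lb | kerL0 mu]; last first.
  apply/norm_eq_sqrt_pow2 => //; rewrite walsh_normCK /walsh (bigD1 0) //= big1.
    by rewrite L0 c0 eqxx mulr0 trb0 /= mulr1n !mul1r addr0 mulr1.
  move=> a a_neq0; case: eqP => [/kerL0 a0 | _]; last by rewrite mulr0n !mul0r.
  by rewrite a0 eqxx in a_neq0.
have walsh_t1 mu : walsh t mu = 1.
  apply: (mulfI N_neq0); rewrite -walsh_normCK mulr1.
  by apply/(norm_eq_sqrt_pow2 _ n_even).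
apply/eqP; apply: contraT => b_neq0.
have := walsh_eq1_supp0 walsh_t1 b_neq0; rewrite /t Lb eqxx mul1r => /eqP.
by rewrite (negbTE (c_neq0 b)).
Qed.
End WalshSpectrum.

Section SelfDualBasis.
Variable alpha : 'I_n -> F.
Hypothesis alpha_sd : self_dual alpha.

Definition coord (x : F) (i : 'I_n) : bool := trb n (alpha i * x).

Lemma coord_comb (c : {ffun 'I_n -> bool}) j :
  coord (\sum_i (c i)%:R * alpha i) j = c j.
Proof.
rewrite /coord /trb mulr_sumr Tr_sum.
rewrite (eq_bigr (fun i => (c i)%:R * (i == j)%:R)) => [|i _]; last first.
  by rewrite mulrCA Tr_natrM alpha_sd eq_sym.
rewrite (bigD1 j) //= big1 ?addr0 ?eqxx ?mulr1 ?natr_bool_neq0 // => i /negbTE ->.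
by rewrite mulr0.
Qed.

Lemma coord_combK (x : F) : \sum_i (coord x i)%:R * alpha i = x.
Proof.
pose comb (c : {ffun 'I_n -> bool}) := \sum_i (c i)%:R * alpha i.
have comb_inj : injective comb.
  by move=> c c' eq_cc'; apply/ffunP => j; rewrite -!(coord_comb _ j) -/(comb _) eq_cc'.
have : x \in codom comb.
  by apply: (inj_card_onto comb_inj); rewrite card_ffun card_bool card_ord cardF.
by case/codomP=> c ->; apply: eq_bigr => i _; rewrite coord_comb.
Qed.

Lemma wtE (x : F) : wt alpha x = #|[set i | coord x i]|.
Proof.
rewrite /wt /coords; case: pickP => [c /eqP -> | no_coords].
  by apply: eq_card => i; rewrite !inE coord_comb.
have := no_coords [ffun i => coord x i].
by under eq_bigr do rewrite ffunE; rewrite coord_combK eqxx.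
Qed.

Lemma wt0 : wt alpha 0 = 0%N.
Proof.
rewrite wtE (eq_card (B := pred0)) ?card0 // => i.
by rewrite inE /coord mulr0 trb0.
Qed.

Lemma trb_mul_coord (x a : F) :
  trb n (x * a) = \big[addb/false]_i (coord x i && coord a i).
Proof.
have natr_bigaddb (b : 'I_n -> bool) :
    (\big[addb/false]_i b i)%:R = \sum_i (b i)%:R :> F.
  exact: (big_morph (fun u : bool => u%:R : F) natr_addb).
rewrite -[RHS]natr_bool_neq0 natr_bigaddb /trb -{1}(coord_combK x) mulr_suml Tr_sum.
congr (_ != 0); apply: eq_bigr => i _.
by rewrite -mulrA Tr_natrM mulrC Tr_bool; case: (coord x i); rewrite ?mulr1 ?mulr0.
Qed.

(* Coordinatewise this is [i^u conj(i^(u xor v)) = (-i)^v (-1)^(u v)] for bits [u, v]. *)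
Lemma expCi_wt_corr (x a : F) :
  'i ^+ wt alpha x * ('i ^+ wt alpha (x + a))^* =
  (-'i) ^+ wt alpha a * sgn (trb n (x * a)).
Proof.
have exp_card (z : algC) (b : 'I_n -> bool) :
    z ^+ #|[set i | b i]| = \prod_i (if b i then z else 1).
  by rewrite -prodr_const big_mkcond /=; apply: eq_bigr => i _; rewrite inE.
have sgn_bigaddb (b : 'I_n -> bool) :
    sgn (\big[addb/false]_i b i) = \prod_i sgn (b i).
  by apply: (big_morph sgn (signr_addb _)); rewrite /sgn expr0.
rewrite !wtE !exp_card rmorph_prod -big_split trb_mul_coord sgn_bigaddb -big_split.
apply: eq_bigr => i _; rewrite /coord mulrDr trbD -!/(coord _ i).
case: (coord x i); case: (coord a i); rewrite /sgn /= ?expr0 ?expr1 ?rmorph1 ?mulr1 ?mul1r //.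
- by rewrite mulrN1 opprK.
- by rewrite -normCK normCi expr1n.
- exact: conjCi.
Qed.
End SelfDualBasis.

Lemma additive_injP (L : F -> F) : (forall x y, L (x + y) = L x + L y) ->
  injective L <-> (forall a, L a = 0 -> a = 0).
Proof.
move=> LD; have L0 : L 0 = 0 by apply: (addrI (L 0)); rewrite -LD !addr0.
split=> [L_inj a La0 | kerL0 x y Lxy]; first by apply: L_inj; rewrite La0 L0.
by apply/eqP; rewrite -addr_eq0_char2; apply/eqP/kerL0; rewrite LD Lxy addrr_char2.
Qed.

Section GoldFunction.
Variables (k : nat) (lambda : F).

Definition gold (x : F) : bool := trb n (lambda * x ^+ (2 ^ k + 1)).

Definition gold_lin (a : F) : F := frob_inv k (lambda * a) + lambda * frob k a.

Lemma gold_linD x y : gold_lin (x + y) = gold_lin x + gold_lin y.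
Proof. by rewrite /gold_lin /frob_inv !mulrDr !frobD mulrDr addrACA. Qed.

Lemma gold_lin0 : gold_lin 0 = 0.
Proof. by rewrite /gold_lin /frob_inv mulr0 !frob0 mulr0 addr0. Qed.

Lemma gold0 : gold 0 = false.
Proof. by rewrite /gold expr0n addn1 mulr0 trb0. Qed.

Lemma exp_gold (x : F) : x ^+ (2 ^ k + 1) = frob k x * x.
Proof. by rewrite addn1 exprS mulrC. Qed.

(* The cross term [Tr(lambda a x^(2^k))] becomes [Tr(x (lambda a)^(2^(n-k)))] by
   applying [frob (n - k)] inside the trace. *)
Lemma goldD (x a : F) : gold (x + a) = gold x (+) gold a (+) trb n (x * gold_lin a).
Proof.
rewrite /gold !exp_gold frobD.
have -> : lambda * ((frob k x + frob k a) * (x + a)) =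
    lambda * (frob k x * x) + lambda * (frob k a * a)
    + lambda * a * frob k x + x * (lambda * frob k a) by ring.
rewrite !trbD /gold_lin mulrDr trbD -(trb_frob (n - k %% n) (lambda * a * frob k x)).
by rewrite frobM -/(frob_inv k (frob k x)) frobK [frob _ (lambda * a) * x]mulrC !addbA.
Qed.

Lemma sgn_gold_corr x a :
  sgn (gold x) * (sgn (gold (x + a)))^* = sgn (gold a) * sgn (trb n (x * gold_lin a)).
Proof. by rewrite rmorph_sign goldD /sgn !signr_addb !mulrA -expr2 sqrr_sign mul1r. Qed.

Lemma gold_bentP : ~~ odd n -> bent n gold <-> injective gold_lin.
Proof.
move=> n_even; rewrite (additive_injP gold_linD).
rewrite -(walsh_flatP sgn_gold_corr) ?gold0 ?gold_lin0 //; last by move=> a; rewrite signr_eq0.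
have walshE mu : \sum_x sgn (gold x (+) trb n (mu * x)) = walsh (sgn \o gold) mu.
  by apply: eq_bigr => x _; rewrite /sgn signr_addb.
by split=> flat mu; [rewrite -walshE | rewrite walshE]; apply: flat.
Qed.

Section Negabent.
Variable alpha : 'I_n -> F.
Hypothesis alpha_sd : self_dual alpha.

Lemma nega_gold_corr x a :
  (sgn (gold x) * 'i ^+ wt alpha x) * (sgn (gold (x + a)) * 'i ^+ wt alpha (x + a))^* =
  (sgn (gold a) * (-'i) ^+ wt alpha a) * sgn (trb n (x * (gold_lin a + a))).
Proof.
rewrite rmorphM mulrACA sgn_gold_corr expCi_wt_corr // [x * (_ + a)]mulrDr trbD.
by rewrite /sgn signr_addb mulrACA.
Qed.

Lemma gold_negabentP : ~~ odd n ->
  negabent alpha gold <-> injective (fun a => gold_lin a + a).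
Proof.
move=> n_even.
rewrite (additive_injP (L := fun a => gold_lin a + a)); last first.
  by move=> x y; rewrite gold_linD addrACA.
rewrite -(walsh_flatP nega_gold_corr) ?gold0 ?wt0 ?gold_lin0 ?addr0 ?mulr1 //; last first.
  by move=> a; rewrite mulf_neq0 ?signr_eq0 // expf_neq0 // oppr_eq0 neq0Ci.
have walshE mu : \sum_x sgn (gold x (+) trb n (mu * x)) * 'i ^+ wt alpha x =
    walsh (fun x => sgn (gold x) * 'i ^+ wt alpha x) mu.
  by apply: eq_bigr => x _; rewrite /sgn signr_addb mulrAC.
by split=> flat mu; [rewrite -walshE | rewrite walshE]; apply: flat.
Qed.
End Negabent.

Lemma gold_lin_eq0 a :
  (gold_lin a == 0) = (frob_inv k (lambda * a) == lambda * frob k a).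
Proof. exact: addr_eq0_char2. Qed.

Lemma gold_lin_ker_of_pow v :
  lambda = v ^+ (2 ^ k + 1) -> exists2 a, a != 0 & gold_lin a = 0.
Proof.
move=> def_lambda; have [v0 | v_neq0] := eqVneq v 0.
  exists 1; rewrite ?oner_eq0 //; apply/eqP; rewrite gold_lin_eq0 def_lambda v0.
  by rewrite exp_gold frob0 !mul0r /frob_inv frob0.
exists v^-1; rewrite ?invr_eq0 //; apply/eqP; rewrite gold_lin_eq0 def_lambda exp_gold.
by rewrite mulfK // frobK frobV mulrAC mulfV ?frob_eq0 // mul1r.
Qed.

Lemma pow_of_gold_lin_ker a :
  a != 0 -> gold_lin a = 0 -> exists v, lambda = v ^+ (2 ^ k + 1).
Proof.
move=> a_neq0 /eqP; rewrite gold_lin_eq0 => /eqP /(congr1 (frob k)); rewrite frob_invK frobM.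
set c := lambda * a * frob k a => frob_lambda_a.
have frob_c : frob k c = c by rewrite /c !frobM mulrAC -frob_lambda_a.
pose w := frob_inv 1 c.
have w_exp : w ^+ (2 ^ k + 1) = c.
  by rewrite exp_gold /w frobC frob_c -frob1E frob_invK.
exists (w / a); rewrite exprMn w_exp exprVn exp_gold /c invfM.
by field; rewrite a_neq0 frob_eq0 a_neq0.
Qed.

Lemma gold_lin_injP : injective gold_lin <-> ~ exists v, lambda = v ^+ (2 ^ k + 1).
Proof.
rewrite (additive_injP gold_linD).
split=> [kerL0 [v /gold_lin_ker_of_pow [a a_neq0 La0]] | no_pow a La0].
  by move/eqP: (kerL0 a La0) a_neq0 => ->.
by apply/eqP; apply: contraT => a_neq0; case: no_pow; apply: pow_of_gold_lin_ker a_neq0 La0.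
Qed.

(* With [w_i = w^(2^(i k))], this lambda makes [w_0 + w_1] a fixed point of [gold_lin];
   at [w = 1/v] it is the second excluded form of the statement. *)
Definition gold_param (w : F) : F :=
  frob k w ^+ 2 / ((w + frob k w) * (frob k w + frob k (frob k w))).

Lemma gold_param_inv v : frob k v != v ->
  v ^+ (2 ^ (2 * k) + 1) / (v + v ^+ (2 ^ k)) ^+ (2 ^ k + 1) = gold_param v^-1.
Proof.
move=> frob_v_neq.
have v_neq0 : v != 0 by apply: contraNneq frob_v_neq => ->; rewrite frob0.
have v01 : v + frob k v != 0 by rewrite addr_eq0_char2 eq_sym.
have v12 : frob k v + frob k (frob k v) != 0 by rewrite -frobD frob_eq0.
have -> : v ^+ (2 ^ (2 * k) + 1) = frob k (frob k v) * v.
  by rewrite -frob_addn addnn -mul2n addn1 exprS mulrC.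
rewrite -/(frob k v) exp_gold frobD /gold_param !frobV.
by field; rewrite !frob_eq0 v_neq0 (addrC (frob k (frob k v))) v12 (addrC (frob k v)) v01.
Qed.

Lemma shift_ker_of_param w : frob k w != w -> lambda = gold_param w ->
  gold_lin (w + frob k w) + (w + frob k w) = 0.
Proof.
move=> frob_w_neq def_lambda; apply: (@frob_inj k).
rewrite frob0 frobD /gold_lin frobD frob_invK !frobM def_lambda /gold_param.
rewrite !(frobM, frobV, frobD) -[frob k (frob k w) * _]expr2.
set w1 := frob k w; set w2 := frob k w1; set w3 := frob k w2.
have w01 : w + w1 != 0 by rewrite addr_eq0_char2 eq_sym.
have w12 : w1 + w2 != 0 by rewrite -frobD frob_eq0.
have w23 : w2 + w3 != 0 by rewrite -!frobD !frob_eq0.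
have -> : w1 ^+ 2 / ((w + w1) * (w1 + w2)) * (w + w1)
    + w2 ^+ 2 / ((w1 + w2) * (w2 + w3)) * (w2 + w3) = (w1 ^+ 2 + w2 ^+ 2) / (w1 + w2).
  by field; rewrite w01 w12 w23.
by rewrite -(frobD 1 w1 w2) frob1E mulfK // addrr_char2.
Qed.

Lemma param_of_shift_ker x : x != 0 -> gold_lin x + x = 0 ->
  exists2 w, w + frob k w = x & lambda = gold_param w.
Proof.
move=> x_neq0 /eqP; rewrite addr_eq0_char2 => /eqP Lx.
pose c := lambda * x * frob k x.
pose w := frob_inv k (frob_inv 1 c).
have frob_w : frob k w = frob_inv 1 c by rewrite frob_invK.
have w_shift : w + frob k w = x.
  apply: (@frob_inj 1); rewrite frobD frob_w frob_invK /w frobC frob_invK.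
  rewrite /c !frobM -/(frob_inv k (frob k x)) frobK frob1E -[X in _ = _ * X]Lx.
  by rewrite /gold_lin /frob_inv frobM; ring.
exists w => //.
have x1_neq0 : frob k x != 0 by rewrite frob_eq0.
rewrite /gold_param -frobD w_shift frob_w -[_ ^+ 2]/(frob 1 _) frob_invK /c.
by field; rewrite x_neq0 x1_neq0.
Qed.

Lemma gold_lin_shift_injP : (0 < k)%N ->
  injective (fun a => gold_lin a + a) <->
  ~ (exists v : F, v ^+ (2 ^ gcdn k n) != v /\
       lambda = v ^+ (2 ^ (2 * k) + 1) / (v + v ^+ (2 ^ k)) ^+ (2 ^ k + 1)).
Proof.
move=> k_gt0.
have nfix_gcdn v : (v ^+ (2 ^ gcdn k n) != v) = (frob k v != v).
  by congr negb; apply/eqP/eqP => /(frob_fixed_gcdn v k_gt0).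
have nfixV v : (frob k v^-1 != v^-1) = (frob k v != v).
  by rewrite frobV (inj_eq (can_inj (@invrK _))).
have shift_neq0 w : (w + frob k w != 0) = (frob k w != w).
  by rewrite addr_eq0_char2 eq_sym.
rewrite (additive_injP (L := fun a => gold_lin a + a)); last first.
  by move=> x y; rewrite gold_linD addrACA.
split=> [kerL0 [v [v_nfix def_lambda]] | no_form x Lx].
  rewrite nfix_gcdn in v_nfix; rewrite gold_param_inv // in def_lambda.
  have := shift_ker_of_param _ def_lambda; rewrite nfixV => /(_ v_nfix) /kerL0 /eqP.
  by apply/negP; rewrite shift_neq0 nfixV.
apply/eqP; apply: contraT => x_neq0; case: no_form.
have [w w_shift def_lambda] := param_of_shift_ker x_neq0 Lx.
have w_nfix : frob k w^-1 != w^-1 by rewrite nfixV -shift_neq0 w_shift.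
by exists w^-1; rewrite nfix_gcdn gold_param_inv ?invrK.
Qed.
End GoldFunction.
End FieldOfOrder2n.

Lemma perm_polyP (F : finFieldType) (p : {poly F}) : perm_poly p <-> injective (horner p).
Proof. by split=> [/bij_inj | /injF_bij]. Qed.

Unset Implicit Arguments.
Set Strict Implicit.

Theorem theorem3 (F : finFieldType) (n k : nat) (lambda : F)
  (alpha : 'I_n -> F) :
  #|F| = (2 ^ n)%N -> ~~ odd n -> (1 <= k)%N -> self_dual alpha ->
  let d := gcdn k n in
  let f := fun x : F => trb n (lambda * x ^+ (2 ^ k + 1)) in
  let P : {poly F} :=
    (lambda ^+ (2 ^ (n - k %% n)))%:P * 'X^(2 ^ (n - k %% n))
    + lambda%:P * 'X^(2 ^ k) in
  let cond1 := complete_mapping P in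
  let cond2 :=
    ~ (exists v0 : F, v0 ^+ (2 ^ d) != v0 /\
         lambda = v0 ^+ (2 ^ (2 * k) + 1) / (v0 + v0 ^+ (2 ^ k)) ^+ (2 ^ k + 1))
    /\ ~ (exists v : F, lambda = v ^+ (2 ^ k + 1)) in
  (bent_negabent alpha f <-> cond1) /\ (cond1 <-> cond2).
Proof.
move=> cardF n_even k_gt0 alpha_sd d f P cond1 cond2.
have P_eval : horner P =1 gold_lin n k lambda.
  by move=> x; rewrite hornerD !hornerCM !hornerXn -exprMn.
have PX_eval : horner (P + 'X) =1 (fun a => gold_lin n k lambda a + a).
  by move=> x; rewrite hornerD hornerX P_eval.
have cond1E : cond1 <->
    injective (gold_lin n k lambda) /\ injective (fun a => gold_lin n k lambda a + a).
  rewrite /cond1 /complete_mapping !perm_polyP.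
  split=> -[inj_L inj_L1]; split.
  - exact: eq_inj inj_L P_eval.
  - exact: eq_inj inj_L1 PX_eval.
  - exact: eq_inj inj_L (fsym P_eval).
  - exact: eq_inj inj_L1 (fsym PX_eval).
split; rewrite cond1E.
  by rewrite /bent_negabent (gold_bentP cardF) // (gold_negabentP cardF).
by rewrite (gold_lin_injP cardF) (gold_lin_shift_injP cardF) // and_comm.
Qed.
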